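(* Let $(\mathbf{i},\mathbf{a})\in I^m\times\mathbb{Z}^m$ be an integral pair and let $\pi_{\mathbf{a}}\in S_m$ be the shortest permutation such that $\pi_{\mathbf{a}}(\mathbf{a})$ is weakly increasing with respect to the preorder $\preceq$. Then $\pi_{\mathbf{a}}$ is $(\mathbf{i},\mathbf{a})$-admissible.
   Context: $I$ is the vertex set of a finite simple bipartite graph $I=I_{\bar0}\sqcup I_{\bar1}$ (parities $0,1$); every edge is oriented from its even endpoint to its odd endpoint, and $i\leftarrow j$ means there is an oriented edge from $j$ to $i$. $(\mathbf{i},\mathbf{a})$ is integral if each $a_k$ is an integer whose residue mod 2 equals the parity of $i_k$. The preorder $\preceq$ on $\mathbb{Z}$ is $a\preceq b$ iff $\lfloor a/2\rfloor\le\lfloor b/2\rfloor$. $S_m$ acts on tuples by $\pi(\mathbf{a})=(a_{\pi^{-1}(1)},\dots,a_{\pi^{-1}(m)})$. Distinct indices $k,l$ are not $(\mathbf{i},\mathbf{a})$-switchable if $i_k\leftarrow i_l$ and $a_k=a_l+1$ (checked for the pair in either order); $\pi$ is $(\mathbf{i},\mathbf{a})$-admissible if for every non-switchable pair $k,l$, $\pi(k),\pi(l)$ are in the same relative order as $k,l$. *)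

From mathcomp Require Import all_boot all_order all_algebra all_fingroup.
Set Implicit Arguments. Unset Strict Implicit. Unset Printing Implicit Defensive.
From mathcomp Require Import intdiv.
Import Order.TTheory GRing.Theory Num.Theory.

(* Vertex set: a finType T with parity par : T -> bool (false = parity 0 = even,
   true = parity 1 = odd) and adjacency e : rel T.  *)

Definition simple_bipartite (T : finType) (par : T -> bool) (e : rel T) : Prop :=
  (forall x y, e x y = e y x) /\ (forall x, ~~ e x x) /\
  (forall x y, e x y -> par x != par y).

(* i <- j : oriented edge from j to i, edges oriented from even to odd endpoint *)
Definition arrow (T : finType) (par : T -> bool) (e : rel T) (i j : T) : bool :=
  [&& e j i, ~~ par j & par i].

Definition integral (T : finType) (par : T -> bool) m (i : 'I_m -> T) (a : 'I_m -> int) : Prop :=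
  forall k, (a k %% 2)%Z = (Posz (par (i k) : nat)).

Definition preceq (a b : int) : bool := ((a %/ 2)%Z <= (b %/ 2)%Z)%R.

Definition permact m (pi : 'S_m) (A : Type) (a : 'I_m -> A) : 'I_m -> A :=
  fun k => a ((pi^-1)%g k).

Definition weakly_increasing m (b : 'I_m -> int) : Prop :=
  forall k l : 'I_m, k <= l -> preceq (b k) (b l).

Definition perm_length m (pi : 'S_m) : nat :=
  #|[set p : 'I_m * 'I_m | (p.1 < p.2) && (pi p.2 < pi p.1)]|.

Definition not_switchable (T : finType) (par : T -> bool) (e : rel T) m
  (i : 'I_m -> T) (a : 'I_m -> int) (k l : 'I_m) : bool :=
  (k != l) &&
  ((arrow par e (i k) (i l) && (a k == a l + 1)%R) ||
   (arrow par e (i l) (i k) && (a l == a k + 1)%R)).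

Definition admissible (T : finType) (par : T -> bool) (e : rel T) m
  (i : 'I_m -> T) (a : 'I_m -> int) (pi : 'S_m) : Prop :=
  forall k l : 'I_m, not_switchable par e i a k l ->
    (k < l) = (pi k < pi l).

From mathcomp Require Import all_boot all_order all_algebra all_fingroup.
From mathcomp Require Import intdiv zify.
Set Implicit Arguments. Unset Strict Implicit. Unset Printing Implicit Defensive.
Import Order.TTheory GRing.Theory.

(* A non-switchable pair carries entries 2n and 2n + 1, so both have the same
   key floor(a/2), and it suffices to show that a shortest sorting permutation
   is stable.  If it inverted two items of equal key, take such an inverted
   pair whose positions are closest: every item placed between them has the
   same key and, by closeness, also lies between them in index.  Swapping the
   two items then keeps the sequence sorted and removes inversions without
   creating any, contradicting minimality. *)

Section StableSorting.

Variables (d : Order.disp_t) (K : porderType d) (m : nat) (key : 'I_m -> K).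

Definition sorts (pi : 'S_m) : Prop :=
  forall x y : 'I_m, pi x <= pi y -> (key x <= key y)%O.

Lemma sorts_key_between (pi : 'S_m) (x y z : 'I_m) :
  sorts pi -> key x = key y -> pi x <= pi z <= pi y -> key z = key x.
Proof.
move=> pi_sorts kxy /andP[xz zy]; apply/eqP; rewrite eq_le.
by rewrite {1}kxy (pi_sorts _ _ zy) (pi_sorts _ _ xz).
Qed.

Lemma sorts_tperm (pi : 'S_m) (u v : 'I_m) :
  sorts pi -> key u = key v -> sorts (tperm u v * pi).
Proof.
move=> pi_sorts kuv.
have key_tperm x : key (tperm u v x) = key x by case: tpermP => // ->; rewrite kuv.
move=> x y; rewrite !permM -(key_tperm x) -(key_tperm y); apply: pi_sorts.
Qed.

Lemma perm_length_tperm_ltn (pi : 'S_m) (u v : 'I_m) :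
  u < v -> pi v < pi u -> (forall z, pi v < pi z < pi u -> u < z < v) ->
  perm_length (tperm u v * pi) < perm_length pi.
Proof.
move=> uv vu between; apply: proper_card; apply/properP; split; last first.
  exists (u, v); first by rewrite !inE /= uv.
  by rewrite !inE /= uv !permM tpermL tpermR -leqNgt ltnW.
have pi_neq z w : z <> w -> (pi z : nat) <> pi w by move=> zw /val_inj/perm_inj.
apply/subsetP => -[x y]; rewrite !inE /= !permM.
move: (between x) (between y).
case: (tpermP u v x) => [->|->|/pi_neq xu /pi_neq xv];
  case: (tpermP u v y) => [->|->|/pi_neq yu /pi_neq yv]; lia.
Qed.

Lemma sorts_closest_inversion (pi : 'S_m) (u v : 'I_m) :
  sorts pi -> u < v -> key u = key v -> pi v < pi u ->
  exists u' v' : 'I_m, [/\ u' < v', key u' = key v', pi v' < pi u' &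
    forall z, pi v' < pi z < pi u' -> u' < z < v'].
Proof.
move=> pi_sorts uv kuv vu.
pose inverted (p : 'I_m * 'I_m) :=
  [&& p.1 < p.2, key p.1 == key p.2 & pi p.2 < pi p.1].
have inv_uv : inverted (u, v) by rewrite /inverted /= uv kuv eqxx.
case: (arg_minnP (fun p => pi p.1 - pi p.2) inv_uv).
move=> -[u' v'] /and3P[/= uv' /eqP kuv' vu'] closest.
exists u', v'; split=> // z /andP[vz zu].
have kz : key z = key v'.
  by apply: (sorts_key_between pi_sorts (esym kuv')); rewrite (ltnW vz) (ltnW zu).
have u'z : u' < z.
  case: ltngtP => // [zu' | /val_inj u'z]; last by rewrite u'z ltnn in zu.
  have := closest (z, v'); rewrite /inverted /= (ltn_trans zu' uv') kz eqxx vz.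
  by move/(_ isT); lia.
rewrite u'z /=; case: ltngtP => // [v'z | /val_inj zv']; last by rewrite zv' ltnn in vz.
have := closest (u', z); rewrite /inverted /= u'z kz -kuv' eqxx zu.
by move/(_ isT); lia.
Qed.

Lemma min_sorting_stable (pi : 'S_m) (u v : 'I_m) :
  sorts pi -> (forall s, sorts s -> perm_length pi <= perm_length s) ->
  u < v -> key u = key v -> pi u < pi v.
Proof.
move=> pi_sorts pi_min uv kuv.
case: ltngtP => // [vu | /val_inj/perm_inj eq_uv]; last by rewrite eq_uv ltnn in uv.
have [u' [v' [uv' kuv' vu' between]]] := sorts_closest_inversion pi_sorts uv kuv vu.
have := pi_min _ (sorts_tperm pi_sorts kuv').
by rewrite leqNgt perm_length_tperm_ltn.
Qed.

Lemma min_sorting_ltn_eq (pi : 'S_m) (k l : 'I_m) :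
  sorts pi -> (forall s, sorts s -> perm_length pi <= perm_length s) ->
  k != l -> key k = key l -> (k < l) = (pi k < pi l).
Proof.
move=> pi_sorts pi_min neq_kl kkl.
case: ltngtP => [kl | lk | /val_inj eq_kl]; last by rewrite eq_kl eqxx in neq_kl.
- by rewrite (min_sorting_stable pi_sorts pi_min kl kkl).
- by have := min_sorting_stable pi_sorts pi_min lk (esym kkl); lia.
Qed.

End StableSorting.

Lemma divz2_succ_even (x : int) : (x %% 2)%Z = 0 -> ((x + 1) %/ 2)%Z = (x %/ 2)%Z.
Proof.
move=> x_even; rewrite {1}(divz_eq x 2) x_even addr0 divzMDl //.
by rewrite (@divz_small 1 2) ?addr0.
Qed.

Lemma not_switchable_same_half (T : finType) (par : T -> bool) (e : rel T) m
    (i : 'I_m -> T) (a : 'I_m -> int) (k l : 'I_m) :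
  integral par i a -> not_switchable par e i a k l -> (a k %/ 2)%Z = (a l %/ 2)%Z.
Proof.
move=> int_ia /andP[_ /orP[] /andP[/and3P[_ even _] /eqP succ]].
- by rewrite succ divz2_succ_even // int_ia (negbTE even).
- by rewrite succ divz2_succ_even // int_ia (negbTE even).
Qed.

Lemma weakly_increasing_sorts m (a : 'I_m -> int) (pi : 'S_m) :
  weakly_increasing (permact pi a) <-> sorts (fun k => (a k %/ 2)%Z) pi.
Proof.
split=> sorted x y xy.
- by have := sorted _ _ xy; rewrite /permact /preceq !permK.
- by rewrite /preceq; apply: sorted; rewrite /permact !permKV.
Qed.

Theorem lemma5p9 (T : finType) (par : T -> bool) (e : rel T) (m : nat)
  (i : 'I_m -> T) (a : 'I_m -> int) (pi_a : 'S_m) :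
  simple_bipartite par e ->
  integral par i a ->
  weakly_increasing (permact pi_a a) ->
  (forall sigma : 'S_m, weakly_increasing (permact sigma a) ->
     perm_length pi_a <= perm_length sigma) ->
  admissible par e i a pi_a.
Proof.
(* Only the parity of the tail of an arrow matters. *)
move=> _ int_ia /weakly_increasing_sorts pi_sorts pi_min k l nsw.
apply: min_sorting_ltn_eq pi_sorts _ _ _.
- by move=> s /weakly_increasing_sorts; apply: pi_min.
- by case/andP: nsw.
- exact: not_switchable_same_half int_ia nsw.
Qed.
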